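(* Let $X$ be a normal $k$-space which contains a closed subspace homeomorphic to $K$ and a closed subspace homeomorphic to $V$. Then: (a) $X$ is not homeomorphic to any closed multiplicative subset of a topological group; (b) $X$ is not homeomorphic to any closed convex subset of a (real) linear topological space.
   Context: $K=\{(0,0)\}\cup\{(\tfrac1n,\tfrac1{nm}) : n,m\in\mathbb N\}\subset\mathbb R^2$ with the subspace topology. Let $S_0=\{0\}\cup\{\tfrac1n:n\in\mathbb N\}\subset\mathbb R$ and let $V$ (the Fréchet–Urysohn fan) be the quotient space $(\mathbb N\times S_0)/(\mathbb N\times\{0\})$, where $\mathbb N$ is discrete, i.e. $\mathbb N\times S_0$ with the subset $\mathbb N\times\{0\}$ collapsed to a single point. A subset $A$ of a topological group $G$ is multiplicative if $a\ast b\in A$ for all $a,b\in A$, where $\ast$ is the group operation. A $k$-space is a space in which a set is closed iff its intersection with every compact subset $C$ is closed in $C$. *)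

From Stdlib Require Import Reals List.
Open Scope R_scope.

(** A topology on a type T is given by its family of open sets. *)
Definition topo (T : Type) := (T -> Prop) -> Prop.

Definition is_topology {T : Type} (O : topo T) : Prop :=
  O (fun _ => True) /\
  (forall U W, O U -> O W -> O (fun x => U x /\ W x)) /\
  (forall F : (T -> Prop) -> Prop, (forall U, F U -> O U) ->
       O (fun x => exists U, F U /\ U x)).

Definition closed {T : Type} (O : topo T) (A : T -> Prop) : Prop :=
  O (fun x => ~ A x).

Definition sub_topo {T : Type} (O : topo T) (A : T -> Prop) : topo {x : T | A x} :=
  fun U => exists W, O W /\ forall a : {x : T | A x}, U a <-> W (proj1_sig a).

Definition prod_topo {T1 T2 : Type} (O1 : topo T1) (O2 : topo T2) : topo (T1 * T2) :=
  fun U => forall p, U p -> exists U1 U2, O1 U1 /\ O2 U2 /\ U1 (fst p) /\ U2 (snd p) /\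
     forall q, U1 (fst q) -> U2 (snd q) -> U q.

(** Quotient space of T by a relation R (an equivalence relation):
    points are the equivalence classes. *)
Definition quot {T : Type} (R : T -> T -> Prop) : Type :=
  {C : T -> Prop | exists y, C = R y}.

Definition qclass {T : Type} (R : T -> T -> Prop) (y : T) : quot R :=
  exist _ (R y) (ex_intro _ y eq_refl).

Definition quot_topo {T : Type} (O : topo T) (R : T -> T -> Prop) : topo (quot R) :=
  fun U => O (fun y => U (qclass R y)).

Definition discrete_topo (T : Type) : topo T := fun _ => True.

Definition continuous {T1 T2 : Type} (O1 : topo T1) (O2 : topo T2) (f : T1 -> T2) : Prop :=
  forall U, O2 U -> O1 (fun x => U (f x)).

Definition homeomorphic {T1 T2 : Type} (O1 : topo T1) (O2 : topo T2) : Prop :=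
  exists (f : T1 -> T2) (g : T2 -> T1),
    (forall x, g (f x) = x) /\ (forall y, f (g y) = y) /\
    continuous O1 O2 f /\ continuous O2 O1 g.

(** Normal space (Engelking's convention: T1 + separation of disjoint closed sets). *)
Definition normal {T : Type} (O : topo T) : Prop :=
  (forall x y : T, x <> y -> exists U, O U /\ U x /\ ~ U y) /\
  (forall A B : T -> Prop, closed O A -> closed O B -> (forall x, A x -> B x -> False) ->
     exists U W, O U /\ O W /\ (forall x, A x -> U x) /\ (forall x, B x -> W x) /\
       (forall x, U x -> W x -> False)).

Definition compact_set {T : Type} (O : topo T) (C : T -> Prop) : Prop :=
  forall F : (T -> Prop) -> Prop, (forall U, F U -> O U) ->
    (forall x, C x -> exists U, F U /\ U x) ->
    exists l : list (T -> Prop), (forall U, In U l -> F U) /\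
      (forall x, C x -> exists U, In U l /\ U x).

(** k-space: a set is closed iff its trace on every compact set C is closed in C
    (the "only if" direction always holds). *)
Definition k_space {T : Type} (O : topo T) : Prop :=
  forall F : T -> Prop,
    (forall C, compact_set O C ->
       exists G, closed O G /\ forall x, C x -> (F x <-> G x)) ->
    closed O F.

Definition R_topo : topo R :=
  fun U => forall x, U x -> exists eps, 0 < eps /\ forall y, Rabs (y - x) < eps -> U y.

Definition R2_topo : topo (R * R) :=
  fun U => forall p, U p -> exists eps, 0 < eps /\
    forall q, sqrt ((fst q - fst p) ^ 2 + (snd q - snd p) ^ 2) < eps -> U q.

Definition K_set (p : R * R) : Prop :=
  p = (0, 0) \/
  exists n m : nat, (1 <= n)%nat /\ (1 <= m)%nat /\ p = (/ INR n, / (INR n * INR m)).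

Definition K_topo : topo {p : R * R | K_set p} := sub_topo R2_topo K_set.

Definition S0_set (x : R) : Prop :=
  x = 0 \/ exists n : nat, (1 <= n)%nat /\ x = / INR n.

Definition S0 : Type := {x : R | S0_set x}.
Definition S0_topo : topo S0 := sub_topo R_topo S0_set.

(** N x S0 with N = {1,2,...} discrete; we index N by nat but only use n >= 1. *)
Definition Npos : Type := {n : nat | (1 <= n)%nat}.
Definition fanbase : Type := (Npos * S0)%type.
Definition fanbase_topo : topo fanbase := prod_topo (discrete_topo Npos) S0_topo.

Definition fan_rel (a b : fanbase) : Prop :=
  a = b \/ (proj1_sig (snd a) = 0 /\ proj1_sig (snd b) = 0).

Definition V_topo : topo (quot fan_rel) := quot_topo fanbase_topo fan_rel.

(** Topological groups (Hausdorffness not assumed). *)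
Definition is_topological_group {G : Type} (O : topo G)
  (mul : G -> G -> G) (inv : G -> G) (e : G) : Prop :=
  is_topology O /\
  (forall x y z, mul x (mul y z) = mul (mul x y) z) /\
  (forall x, mul e x = x) /\ (forall x, mul x e = x) /\
  (forall x, mul (inv x) x = e) /\ (forall x, mul x (inv x) = e) /\
  continuous (prod_topo O O) O (fun p => mul (fst p) (snd p)) /\
  continuous O O inv.

Definition multiplicative {G : Type} (mul : G -> G -> G) (A : G -> Prop) : Prop :=
  forall a b, A a -> A b -> A (mul a b).

(** Real linear topological spaces (Hausdorffness not assumed). *)
Definition is_linear_topological_space {E : Type} (O : topo E)
  (zero : E) (add : E -> E -> E) (opp : E -> E) (scal : R -> E -> E) : Prop :=
  is_topology O /\
  (forall x y z, add x (add y z) = add (add x y) z) /\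
  (forall x y, add x y = add y x) /\
  (forall x, add zero x = x) /\
  (forall x, add (opp x) x = zero) /\
  (forall a x y, scal a (add x y) = add (scal a x) (scal a y)) /\
  (forall a b x, scal (a + b) x = add (scal a x) (scal b x)) /\
  (forall a b x, scal (a * b) x = scal a (scal b x)) /\
  (forall x, scal 1 x = x) /\
  continuous (prod_topo O O) O (fun p => add (fst p) (snd p)) /\
  continuous (prod_topo R_topo O) O (fun p => scal (fst p) (snd p)).

Definition convex {E : Type} (add : E -> E -> E) (scal : R -> E -> E) (A : E -> Prop) : Prop :=
  forall a b t, A a -> A b -> 0 <= t <= 1 -> A (add (scal t a) (scal (1 - t) b)).

From Pilot Require Import Defs.
From Stdlib Require Import Reals List Lra Lia Classical ClassicalEpsilon
  FunctionalExtensionality PropExtensionality ProofIrrelevance.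
Open Scope R_scope.

(* Suppose X is homeomorphic to a closed subset A of G stable under a binary operation
   mu with continuous left and right cancellations lam and rho (the product of a group,
   the midpoint of a linear space).  The copy of K yields points a_nm -> a (n -> oo,
   uniformly in m) with every row m |-> a_nm closed discrete; the copy of V yields points
   b_nm -> b (m -> oo) such that every selection n |-> b_n(j n) is closed discrete.  By
   cancellation, the rows and the selections of the grid c_nm = mu a_nm b_nm are closed
   discrete too, so a compact subset of X meets the grid in finitely many points, and in
   the T1 k-space X every part of the grid is closed.  In particular mu a b has a
   neighbourhood containing no c_nm different from mu a b; but by continuity of mu the row
   c_Nm tends to mu a b for N large. *)

Definition T1_space {T : Type} (O : topo T) : Prop :=
  forall x y : T, x <> y -> exists U, O U /\ U x /\ ~ U y.

Definition cluster {T : Type} (O : topo T) (s : nat -> T) (z : T) : Prop :=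
  forall W, O W -> W z -> forall M, exists m, (M <= m)%nat /\ W (s m).

Definition reflects_clusters {T1 T2 : Type} (O1 : topo T1) (O2 : topo T2)
  (f : T1 -> T2) : Prop :=
  forall s z, cluster O2 (fun m => f (s m)) z -> exists q, cluster O1 s q.

Definition jointly_continuous {T : Type} (O : topo T) (f : T -> T -> T) : Prop :=
  forall x y W, O W -> W (f x y) -> exists U1 U2, O U1 /\ O U2 /\ U1 x /\ U2 y /\
    forall u v, U1 u -> U2 v -> W (f u v).

Lemma continuous_id {T : Type} (O : topo T) : continuous O O (fun x => x).
Proof. intros U HU. exact HU. Qed.

Lemma continuous_comp {T1 T2 T3 : Type} (O1 : topo T1) (O2 : topo T2) (O3 : topo T3)
  (f : T1 -> T2) (g : T2 -> T3) :
  continuous O1 O2 f -> continuous O2 O3 g -> continuous O1 O3 (fun x => g (f x)).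
Proof. intros Hf Hg U HU. exact (Hf _ (Hg U HU)). Qed.

Lemma continuous_val {T : Type} (O : topo T) (A : T -> Prop) :
  continuous (sub_topo O A) O (@proj1_sig T A).
Proof. intros U HU. exists U. split; [exact HU | tauto]. Qed.

Lemma open_of_local {T : Type} (O : topo T) (Q : T -> Prop) : is_topology O ->
  (forall y, Q y -> exists U, O U /\ U y /\ forall x, U x -> Q x) -> O Q.
Proof.
  intros [_ [_ Hunion]] Hloc.
  set (F := fun U => O U /\ forall x, U x -> Q x).
  replace Q with (fun x => exists U, F U /\ U x).
  - apply Hunion. intros U [HU _]. exact HU.
  - apply functional_extensionality; intro x; apply propositional_extensionality; split.
    + intros [U [[_ HUQ] Ux]]. exact (HUQ x Ux).
    + intros Qx. destruct (Hloc x Qx) as [U [HU [Ux HUQ]]]. exists U. now repeat split.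
Qed.

Lemma T1_avoid_list {T : Type} (O : topo T) : is_topology O -> T1_space O ->
  forall (y : T) (L : list T), exists U, O U /\ U y /\ forall x, In x L -> x <> y -> ~ U x.
Proof.
  intros [Htop [Hinter _]] HT1 y L. induction L as [|x0 L [U [HU [Uy HUL]]]].
  - exists (fun _ => True). split; [exact Htop|]. split; [exact I|]. intros x [].
  - destruct (classic (x0 = y)) as [<-|Hne].
    + exists U. split; [exact HU|]. split; [exact Uy|].
      intros x [<-|Hx] Hxy; [congruence | exact (HUL x Hx Hxy)].
    + destruct (HT1 y x0 (not_eq_sym Hne)) as [U0 [HU0 [U0y U0x0]]].
      exists (fun x => U x /\ U0 x). split; [exact (Hinter _ _ HU HU0)|]. split; [now split|].
      intros x [<-|Hx] Hxy [Ux U0x]; [contradiction | exact (HUL x Hx Hxy Ux)].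
Qed.

Lemma finite_closed {T : Type} (O : topo T) (P : T -> Prop) (L : list T) :
  is_topology O -> T1_space O -> (forall x, P x -> In x L) -> closed O P.
Proof.
  intros Htop HT1 HL. apply (open_of_local O); [exact Htop|]. intros y Py.
  destruct (T1_avoid_list O Htop HT1 y L) as [U [HU [Uy HUL]]].
  exists U. split; [exact HU|]. split; [exact Uy|]. intros x Ux Px.
  apply (HUL x (HL x Px)); [intros ->; contradiction | exact Ux].
Qed.

Lemma eventually_forall_in {A : Type} (l : list A) (Q : A -> nat -> Prop) :
  (forall w, In w l -> exists M, forall m, (M <= m)%nat -> Q w m) ->
  exists M, forall w m, In w l -> (M <= m)%nat -> Q w m.
Proof.
  induction l as [|w0 l IH]; intros H.
  - exists 0%nat. intros w m [].
  - destruct IH as [M1 H1]; [intros w Hw; exact (H w (or_intror Hw))|].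
    destruct (H w0 (or_introl eq_refl)) as [M0 H0].
    exists (Nat.max M0 M1). intros w m [<-|Hw] Hm; [apply H0 | apply H1]; auto; lia.
Qed.

Lemma compact_cluster {T : Type} (O : topo T) (C : T -> Prop) (s : nat -> T) :
  compact_set O C -> (forall M, exists m, (M <= m)%nat /\ C (s m)) ->
  exists z, cluster O s z.
Proof.
  intros Hc Hfreq. apply NNPP; intro Hnone.
  set (F := fun W => O W /\ exists M, forall m, (M <= m)%nat -> ~ W (s m)).
  destruct (Hc F) as [l [Hl Hcov]].
  - intros U [HU _]. exact HU.
  - intros x _. apply NNPP; intro Hx. apply Hnone. exists x. intros W HW Wx M.
    apply NNPP; intro HM. apply Hx. exists W. split; [|exact Wx]. split; [exact HW|].
    exists M. intros m Hm Wm. apply HM. now exists m.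
  - destruct (eventually_forall_in l (fun W m => ~ W (s m))) as [M HM].
    { intros W HW. exact (proj2 (Hl W HW)). }
    destruct (Hfreq M) as [m [Hm Cm]]. destruct (Hcov _ Cm) as [W [HW Wm]].
    exact (HM W m HW Hm Wm).
Qed.

Lemma cluster_continuous {T1 T2 : Type} (O1 : topo T1) (O2 : topo T2) (f : T1 -> T2)
  (s : nat -> T1) (t : nat -> T2) (z : T1) :
  continuous O1 O2 f -> (forall m, t m = f (s m)) -> cluster O1 s z -> cluster O2 t (f z).
Proof.
  intros Hf Ht Hc W HW Wz M. destruct (Hc _ (Hf W HW) Wz M) as [m [Hm Wm]].
  exists m. rewrite Ht. now split.
Qed.

Lemma cluster_closed {T : Type} (O : topo T) (A : T -> Prop) (s : nat -> T) (z : T) :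
  closed O A -> (forall m, A (s m)) -> cluster O s z -> A z.
Proof.
  intros HA Hs Hc. apply NNPP; intro Hz.
  destruct (Hc _ HA Hz 0%nat) as [m [_ Hm]]. exact (Hm (Hs m)).
Qed.

Lemma reflects_clusters_retraction {T1 T2 : Type} (O1 : topo T1) (O2 : topo T2)
  (f : T1 -> T2) (g : T2 -> T1) :
  continuous O2 O1 g -> (forall x, g (f x) = x) -> reflects_clusters O1 O2 f.
Proof.
  intros Hg Hgf s z Hc. exists (g z).
  exact (cluster_continuous O2 O1 g _ s z Hg (fun m => eq_sym (Hgf (s m))) Hc).
Qed.

Lemma reflects_clusters_val {T : Type} (O : topo T) (A : T -> Prop) :
  closed O A -> reflects_clusters (sub_topo O A) O (@proj1_sig T A).
Proof.
  intros HA s z Hc.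
  exists (exist _ z (cluster_closed O A _ z HA (fun m => proj2_sig (s m)) Hc)).
  intros W [W' [HW' HE]] Wz M. apply HE in Wz.
  destruct (Hc W' HW' Wz M) as [m [Hm Wm]]. exists m. split; [exact Hm|]. now apply HE.
Qed.

Lemma reflects_clusters_comp {T1 T2 T3 : Type} (O1 : topo T1) (O2 : topo T2)
  (O3 : topo T3) (f : T1 -> T2) (g : T2 -> T3) :
  reflects_clusters O1 O2 f -> reflects_clusters O2 O3 g ->
  reflects_clusters O1 O3 (fun x => g (f x)).
Proof. intros Hf Hg s z Hc. destruct (Hg _ _ Hc) as [q Hq]. exact (Hf _ _ Hq). Qed.

Lemma closed_copy_embeds {X T G : Type} (OX : topo X) (OT : topo T) (OG : topo G)
  (A : X -> Prop) (AG : G -> Prop) :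
  closed OX A -> homeomorphic (sub_topo OX A) OT ->
  closed OG AG -> homeomorphic OX (sub_topo OG AG) ->
  exists f : T -> G, continuous OT OG f /\ reflects_clusters OT OG f /\ forall t, AG (f t).
Proof.
  intros HA [h [k [_ [hk [ch ck]]]]] HAG [phi [psi [psiphi [_ [cphi cpsi]]]]].
  exists (fun t => proj1_sig (phi (proj1_sig (k t)))). split; [|split].
  - apply (continuous_comp _ (sub_topo OG AG)); [|apply continuous_val].
    apply (continuous_comp _ OX); [|exact cphi].
    apply (continuous_comp _ (sub_topo OX A)); [exact ck | apply continuous_val].
  - apply (reflects_clusters_comp _ (sub_topo OG AG)); [|exact (reflects_clusters_val OG AG HAG)].
    apply (reflects_clusters_comp _ OX); [|exact (reflects_clusters_retraction _ _ phi psi cpsi psiphi)].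
    apply (reflects_clusters_comp _ (sub_topo OX A));
      [exact (reflects_clusters_retraction _ _ k h ch hk)
      | exact (reflects_clusters_val OX A HA)].
  - intro t. apply proj2_sig.
Qed.

Definition K_sequence {T : Type} (O : topo T) (a : T) (u : nat -> nat -> T) : Prop :=
  (forall W, O W -> W a -> exists N, forall n m, (N <= n)%nat -> W (u n m)) /\
  (forall n z, ~ cluster O (u n) z).

Definition fan_sequence {T : Type} (O : topo T) (b : T) (v : nat -> nat -> T) : Prop :=
  (forall W, O W -> W b -> forall n, exists M, forall m, (M <= m)%nat -> W (v n m)) /\
  (forall (j : nat -> nat) z, ~ cluster O (fun n => v n (j n)) z).

Lemma K_sequence_image {T1 T2 : Type} (O1 : topo T1) (O2 : topo T2) (f : T1 -> T2)
  (a : T1) (u : nat -> nat -> T1) :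
  continuous O1 O2 f -> reflects_clusters O1 O2 f -> K_sequence O1 a u ->
  K_sequence O2 (f a) (fun n m => f (u n m)).
Proof.
  intros Hf Hr [Hconv Hdisc]. split.
  - intros W HW Wa. exact (Hconv _ (Hf W HW) Wa).
  - intros n z Hc. destruct (Hr (u n) z Hc) as [q Hq]. exact (Hdisc n q Hq).
Qed.

Lemma fan_sequence_image {T1 T2 : Type} (O1 : topo T1) (O2 : topo T2) (f : T1 -> T2)
  (b : T1) (v : nat -> nat -> T1) :
  continuous O1 O2 f -> reflects_clusters O1 O2 f -> fan_sequence O1 b v ->
  fan_sequence O2 (f b) (fun n m => f (v n m)).
Proof.
  intros Hf Hr [Hconv Hdisc]. split.
  - intros W HW Wb. exact (Hconv _ (Hf W HW) Wb).
  - intros j z Hc. destruct (Hr (fun n => v n (j n)) z Hc) as [q Hq]. exact (Hdisc j q Hq).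
Qed.

Section CancellativeGrid.

Variables (G : Type) (OG : topo G) (mu lam rho : G -> G -> G).
Hypotheses (mu_cont : jointly_continuous OG mu) (lam_cont : jointly_continuous OG lam)
  (rho_cont : jointly_continuous OG rho)
  (lam_mu : forall x y, lam (mu x y) y = x) (rho_mu : forall x y, rho x (mu x y) = y).
Variables (a b : G) (u v : nat -> nat -> G).
Hypotheses (Ku : K_sequence OG a u) (Fv : fan_sequence OG b v).

Lemma grid_row_no_cluster n z : ~ cluster OG (fun m => mu (u n m) (v n m)) z.
Proof.
  intro Hc. apply (proj2 Ku n (lam z b)). intros W HW Wz M.
  destruct (lam_cont z b W HW Wz) as [U1 [U2 [HU1 [HU2 [U1z [U2b HU]]]]]].
  destruct (proj1 Fv U2 HU2 U2b n) as [J HJ].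
  destruct (Hc U1 HU1 U1z (Nat.max M J)) as [m [Hm U1m]].
  exists m. split; [lia|]. rewrite <- (lam_mu (u n m) (v n m)).
  apply HU; [exact U1m | apply HJ; lia].
Qed.

Lemma grid_selection_no_cluster (j : nat -> nat) z :
  ~ cluster OG (fun n => mu (u n (j n)) (v n (j n))) z.
Proof.
  intro Hc. apply (proj2 Fv j (rho a z)). intros W HW Wz M.
  destruct (rho_cont a z W HW Wz) as [U1 [U2 [HU1 [HU2 [U1a [U2z HU]]]]]].
  destruct (proj1 Ku U1 HU1 U1a) as [N HN].
  destruct (Hc U2 HU2 U2z (Nat.max M N)) as [n [Hn U2n]].
  exists n. split; [lia|]. rewrite <- (rho_mu (u n (j n)) (v n (j n))).
  apply HU; [apply HN; lia | exact U2n].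
Qed.

Lemma grid_row_eventually_in W : OG W -> W (mu a b) ->
  exists n M, forall m, (M <= m)%nat -> W (mu (u n m) (v n m)).
Proof.
  intros HW Wab. destruct (mu_cont a b W HW Wab) as [U1 [U2 [HU1 [HU2 [U1a [U2b HU]]]]]].
  destruct (proj1 Ku U1 HU1 U1a) as [N HN].
  destruct (proj1 Fv U2 HU2 U2b N) as [M HM].
  exists N, M. intros m Hm. apply HU; [apply HN | apply HM]; lia.
Qed.

Lemma product_not_isolated_from_grid :
  ~ exists W, OG W /\ W (mu a b) /\
      forall n m, W (mu (u n m) (v n m)) -> mu (u n m) (v n m) = mu a b.
Proof.
  intros [W [HW [Wab Hiso]]]. destruct (grid_row_eventually_in W HW Wab) as [n [M HM]].
  apply (grid_row_no_cluster n (mu a b)). intros W' _ W'ab M'.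
  exists (Nat.max M M'). split; [lia|]. rewrite Hiso by (apply HM; lia). exact W'ab.
Qed.

End CancellativeGrid.

Lemma compact_meets_grid_finitely {X : Type} (OX : topo X) (C : X -> Prop)
  (x : nat -> nat -> X) :
  compact_set OX C ->
  (forall n z, ~ cluster OX (x n) z) -> (forall j z, ~ cluster OX (fun n => x n (j n)) z) ->
  exists N M, forall n m, C (x n m) -> (n < N)%nat /\ (m < M)%nat.
Proof.
  intros HC Hrow Hsel.
  assert (Hfar : exists N, forall n m, (N <= n)%nat -> ~ C (x n m)).
  { apply NNPP; intro H.
    set (j := fun n => epsilon (inhabits 0%nat) (fun m => C (x n m))).
    destruct (compact_cluster OX C (fun n => x n (j n)) HC) as [z Hz];
      [|exact (Hsel j z Hz)].
    intro N. apply NNPP; intro HN. apply H. exists N. intros n m Hn Cnm. apply HN.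
    exists n. split; [exact Hn|].
    exact (epsilon_spec _ (fun m => C (x n m)) (ex_intro _ m Cnm)). }
  destruct Hfar as [N HN].
  destruct (eventually_forall_in (seq 0 N) (fun n m => ~ C (x n m))) as [M HM].
  { intros n _. apply NNPP; intro H.
    destruct (compact_cluster OX C (x n) HC) as [z Hz]; [|exact (Hrow n z Hz)].
    intro M. apply NNPP; intro HM. apply H. exists M. intros m Hm Cm. apply HM. now exists m. }
  exists N, M. intros n m Cnm.
  assert (Hn : (n < N)%nat) by (apply NNPP; intro; apply (HN n m); [lia | exact Cnm]).
  split; [exact Hn|]. apply NNPP; intro. apply (HM n m); [apply in_seq; lia | lia | exact Cnm].
Qed.

Lemma grid_subset_closed {X : Type} (OX : topo X) (x : nat -> nat -> X) (P : X -> Prop) :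
  is_topology OX -> T1_space OX -> k_space OX ->
  (forall n z, ~ cluster OX (x n) z) -> (forall j z, ~ cluster OX (fun n => x n (j n)) z) ->
  (forall y, P y -> exists n m, y = x n m) -> closed OX P.
Proof.
  intros Htop HT1 Hk Hrow Hsel HP. apply Hk. intros C HC.
  destruct (compact_meets_grid_finitely OX C x HC Hrow Hsel) as [N [M HNM]].
  exists (fun y => P y /\ C y). split; [|tauto].
  apply (finite_closed _ _ (flat_map (fun n => map (x n) (seq 0 M)) (seq 0 N)) Htop HT1).
  intros y [Py Cy]. destruct (HP y Py) as [n [m ->]]. destruct (HNM n m Cy) as [Hn Hm].
  apply in_flat_map. exists n. split; [apply in_seq; lia|]. apply in_map, in_seq. lia.
Qed.

Lemma grid_isolates_points {X G : Type} (OX : topo X) (OG : topo G) (AG : G -> Prop)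
  (c : nat -> nat -> G) :
  is_topology OX -> T1_space OX -> k_space OX -> homeomorphic OX (sub_topo OG AG) ->
  (forall n m, AG (c n m)) ->
  (forall n z, ~ cluster OG (c n) z) -> (forall j z, ~ cluster OG (fun n => c n (j n)) z) ->
  forall p, AG p -> exists W, OG W /\ W p /\ forall n m, W (c n m) -> c n m = p.
Proof.
  intros Htop HT1 Hk [phi [psi [_ [phipsi [cphi cpsi]]]]] Hc Hrow Hsel p Hp.
  set (x := fun n m => psi (exist _ (c n m) (Hc n m))).
  assert (Hx : forall n m, c n m = proj1_sig (phi (x n m))).
  { intros n m. unfold x. now rewrite phipsi. }
  assert (cphi' : continuous OX OG (fun y => proj1_sig (phi y)))
    by exact (continuous_comp _ _ _ _ _ cphi (continuous_val OG AG)).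
  set (S := fun y => exists n m, y = x n m /\ c n m <> p).
  assert (HS : closed OX S).
  { apply (grid_subset_closed OX x); auto.
    - intros n z Hz. exact (Hrow n _ (cluster_continuous _ _ _ _ _ _ cphi' (Hx n) Hz)).
    - intros j z Hz.
      exact (Hsel j _ (cluster_continuous _ _ _ _ _ _ cphi' (fun n => Hx n (j n)) Hz)).
    - intros y [n [m [-> _]]]. eauto. }
  destruct (cpsi _ HS) as [W [HW HE]].
  exists W. split; [exact HW|]. split.
  - apply (HE (exist _ p Hp)). intros [n [m [Heq Hne]]]. apply Hne.
    rewrite Hx, <- Heq, phipsi. reflexivity.
  - intros n m Wc. apply NNPP; intro Hne.
    apply (HE (exist _ (c n m) (Hc n m))) in Wc. apply Wc. now exists n, m.
Qed.

Lemma inv_INR_S_pos n : 0 < / INR (S n).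
Proof. apply Rinv_0_lt_compat, lt_0_INR. lia. Qed.

Lemma inv_INR_S_le_1 n : / INR (S n) <= 1.
Proof. rewrite <- Rinv_1. apply Rinv_le_contravar; [lra | apply (le_INR 1); lia]. Qed.

Lemma inv_INR_S_le N n : (0 < N)%nat -> (N <= n)%nat -> / INR (S n) <= / INR N.
Proof. intros HN Hn. apply Rinv_le_contravar; [apply lt_0_INR | apply le_INR]; lia. Qed.

Lemma Rabs_le_sqrt_sum_sq x y : Rabs x <= sqrt (x ^ 2 + y ^ 2).
Proof. rewrite <- sqrt_Rsqr_abs. apply sqrt_le_1_alt. unfold Rsqr. nra. Qed.

Lemma sqrt_sum_sq_lt x y eps : 0 <= y <= x -> x < eps / 2 -> sqrt (x ^ 2 + y ^ 2) < eps.
Proof.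
  intros Hy Hx. rewrite <- (sqrt_pow2 eps) by lra. apply sqrt_lt_1_alt. nra.
Qed.

Lemma R2_open_fst_lt c : R2_topo (fun p => fst p < c).
Proof.
  intros p Hp. exists (c - fst p). split; [lra|]. intros q Hq.
  pose proof (Rabs_le_sqrt_sum_sq (fst q - fst p) (snd q - snd p)).
  pose proof (Rle_abs (fst q - fst p)). lra.
Qed.

Lemma R2_open_snd_gt c : R2_topo (fun p => c < snd p).
Proof.
  intros p Hp. exists (snd p - c). split; [lra|]. intros q Hq.
  pose proof (Rabs_le_sqrt_sum_sq (snd q - snd p) (fst q - fst p)) as Hsq.
  rewrite Rplus_comm in Hsq.
  pose proof (Rle_abs (- (snd q - snd p))). rewrite Rabs_Ropp in *. lra.
Qed.

Lemma K_set_inv n m : K_set (/ INR (S n), / (INR (S n) * INR (S m))).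
Proof. right. exists (S n), (S m). repeat split; lia. Qed.

Definition K_point : Type := {p : R * R | K_set p}.
Definition k0 : K_point := exist _ (0, 0) (or_introl eq_refl).
Definition kp (n m : nat) : K_point := exist _ _ (K_set_inv n m).

Lemma kp_converges (W : K_point -> Prop) : K_topo W -> W k0 ->
  exists N, forall n m, (N <= n)%nat -> W (kp n m).
Proof.
  intros [W' [HW' HE]] Wk0. apply HE in Wk0.
  destruct (HW' _ Wk0) as [eps [Heps Hball]].
  destruct (archimed_cor1 (eps / 2)) as [N [HN HN0]]; [lra|].
  exists N. intros n m Hn. apply HE, Hball. cbn [kp k0 proj1_sig fst snd].
  rewrite !Rminus_0_r, Rinv_mult.
  pose proof (inv_INR_S_le N n HN0 Hn). pose proof (inv_INR_S_pos n).
  pose proof (inv_INR_S_pos m). pose proof (inv_INR_S_le_1 m).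
  apply sqrt_sum_sq_lt; [split | lra].
  - apply Rmult_le_pos; lra.
  - rewrite <- (Rmult_1_r (/ INR (S n))) at 2. apply Rmult_le_compat_l; lra.
Qed.

Lemma kp_row_no_cluster n q : ~ cluster K_topo (kp n) q.
Proof.
  intros Hc. destruct q as [p [-> | [n' [m' [Hn' [Hm' ->]]]]]].
  - destruct (Hc (fun s => fst (proj1_sig s) < / INR (S n))) with (M := 0%nat)
      as [m [_ Hm]].
    + exists (fun p => fst p < / INR (S n)). split; [apply R2_open_fst_lt | tauto].
    + apply inv_INR_S_pos.
    + cbn [kp proj1_sig fst] in Hm. lra.
  - set (y := / (INR n' * INR m')).
    assert (Hy : 0 < y) by (apply Rinv_0_lt_compat, Rmult_lt_0_compat; apply lt_0_INR; lia).
    destruct (archimed_cor1 (y / 2)) as [N [HN HN0]]; [lra|].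
    destruct (Hc (fun s => y / 2 < snd (proj1_sig s))) with (M := N) as [m [Hm Hym]].
    + exists (fun p => y / 2 < snd p). split; [apply R2_open_snd_gt | tauto].
    + cbn [proj1_sig snd]. fold y. lra.
    + cbn [kp proj1_sig snd] in Hym. rewrite Rinv_mult in Hym.
      pose proof (inv_INR_S_le N m HN0 Hm). pose proof (inv_INR_S_pos n).
      pose proof (inv_INR_S_le_1 n). pose proof (inv_INR_S_pos m). nra.
Qed.

Lemma K_topo_K_sequence : K_sequence K_topo k0 kp.
Proof. split; [exact kp_converges | exact kp_row_no_cluster]. Qed.

Lemma S0_set_inv j : S0_set (/ INR (S j)).
Proof. right. exists (S j). split; [lia | reflexivity]. Qed.

Definition npos (i : nat) : Defs.Npos := exist _ (S i) (le_n_S _ _ (Nat.le_0_l i)).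
Definition s_zero : S0 := exist _ 0 (or_introl eq_refl).
Definition s_inv (j : nat) : S0 := exist _ _ (S0_set_inv j).
Definition vc : quot fan_rel := qclass fan_rel (npos 0, s_zero).
Definition vp (i j : nat) : quot fan_rel := qclass fan_rel (npos i, s_inv j).

Lemma qclass_apex (y : fanbase) : proj1_sig (snd y) = 0 -> qclass fan_rel y = vc.
Proof.
  intro Hy. apply eq_sig_hprop; [intros; apply proof_irrelevance|].
  apply functional_extensionality; intro w; apply propositional_extensionality.
  cbn. unfold fan_rel. cbn. split; intros [<-|[_ H]]; right; auto.
Qed.

Lemma qclass_surj (z : quot fan_rel) : exists y, z = qclass fan_rel y.
Proof.
  destruct z as [C [y E]]. exists y.
  apply eq_sig_hprop; [intros; apply proof_irrelevance | exact E].
Qed.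

Lemma S0_open_lt c : S0_topo (fun s => proj1_sig s < c).
Proof.
  exists (fun x => x < c). split; [|tauto].
  intros x Hx. exists (c - x). split; [lra|]. intros y Hy.
  pose proof (Rle_abs (y - x)). lra.
Qed.

Lemma S0_open_pos : S0_topo (fun s => 0 < proj1_sig s).
Proof.
  exists (fun x => 0 < x). split; [|tauto].
  intros x Hx. exists x. split; [lra|]. intros y Hy.
  pose proof (Rle_abs (- (y - x))). rewrite Rabs_Ropp in *. lra.
Qed.

Lemma vp_converges (W : quot fan_rel -> Prop) : V_topo W -> W vc ->
  forall i, exists J, forall j, (J <= j)%nat -> W (vp i j).
Proof.
  intros HW Wvc i.
  assert (Wi : W (qclass fan_rel (npos i, s_zero))) by (rewrite qclass_apex; auto).
  destruct (HW _ Wi) as [U1 [U2 [_ [[W' [HW' HE]] [U1i [U2s HU]]]]]].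
  apply HE in U2s. destruct (HW' _ U2s) as [eps [Heps Hball]].
  destruct (archimed_cor1 eps) as [N [HN HN0]]; [exact Heps|].
  exists N. intros j Hj. apply (HU (npos i, s_inv j)); [exact U1i|].
  apply HE, Hball. cbn [proj1_sig snd s_inv s_zero]. rewrite Rminus_0_r.
  pose proof (inv_INR_S_le N j HN0 Hj). pose proof (inv_INR_S_pos j).
  rewrite Rabs_right; lra.
Qed.

Lemma vp_selection_no_cluster_apex (j : nat -> nat) (y : fanbase) :
  proj1_sig (snd y) = 0 -> ~ cluster V_topo (fun n => vp n (j n)) (qclass fan_rel y).
Proof.
  intros Hy Hc.
  (* On spine n keep only the points strictly below vp n (j n): an open neighbourhood of
     the apex that misses the whole selection. *)
  set (t := fun w : fanbase => / INR (S (j (pred (proj1_sig (fst w)))))).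
  set (O := fun c : quot fan_rel => exists w, proj1_sig c w /\ proj1_sig (snd w) < t w).
  assert (HO : V_topo O).
  { intros y' [w [Hw Hlt]].
    assert (Hlt' : proj1_sig (snd y') < t y').
    { destruct Hw as [<-|[H1 _]]; [exact Hlt|]. rewrite H1. apply inv_INR_S_pos. }
    exists (fun n => n = fst y'), (fun s => proj1_sig s < t y').
    split; [exact I|]. split; [apply S0_open_lt|]. split; [reflexivity|]. split; [exact Hlt'|].
    intros q Hq1 Hq2. exists q. split; [now left|]. unfold t. rewrite Hq1. exact Hq2. }
  destruct (Hc O HO) with (M := 0%nat) as [m [_ [w [Hw Hlt]]]].
  - exists y. split; [now left|]. rewrite Hy. apply inv_INR_S_pos.
  - destruct Hw as [<-|[H1 _]].
    + unfold t in Hlt. cbn in Hlt. lra.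
    + cbn [proj1_sig snd s_inv] in H1. pose proof (inv_INR_S_pos (j m)). lra.
Qed.

Lemma vp_selection_no_cluster_off_apex (j : nat -> nat) (y : fanbase) :
  0 < proj1_sig (snd y) -> ~ cluster V_topo (fun n => vp n (j n)) (qclass fan_rel y).
Proof.
  intros Hy Hc.
  set (O := fun c : quot fan_rel => exists w, proj1_sig c w /\
        proj1_sig (fst w) = proj1_sig (fst y) /\ 0 < proj1_sig (snd w)).
  assert (HO : V_topo O).
  { intros y' [w [Hw [Hf Hs]]].
    destruct Hw as [<-|[H1 H2]]; [|lra].
    exists (fun n => n = fst y'), (fun s => 0 < proj1_sig s).
    split; [exact I|]. split; [apply S0_open_pos|]. split; [reflexivity|]. split; [exact Hs|].
    intros q Hq1 Hq2. exists q. split; [now left|]. rewrite Hq1. now split. }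
  destruct (Hc O HO) with (M := proj1_sig (fst y)) as [m [Hm [w [Hw [Hf Hs]]]]].
  - exists y. split; [now left|]. now split.
  - destruct Hw as [<-|[H1 H2]]; [cbn in Hf; lia | lra].
Qed.

Lemma vp_selection_no_cluster (j : nat -> nat) z : ~ cluster V_topo (fun n => vp n (j n)) z.
Proof.
  destruct (qclass_surj z) as [y ->].
  destruct (proj2_sig (snd y)) as [H0 | [k [Hk Hyk]]].
  - exact (vp_selection_no_cluster_apex j y H0).
  - apply vp_selection_no_cluster_off_apex. rewrite Hyk.
    apply Rinv_0_lt_compat, lt_0_INR. lia.
Qed.

Lemma V_topo_fan_sequence : fan_sequence V_topo vc vp.
Proof. split; [exact vp_converges | exact vp_selection_no_cluster]. Qed.

Theorem closed_stable_copy_not_homeomorphic {X G : Type} (OX : topo X) (OG : topo G)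
  (mu lam rho : G -> G -> G) (AG : G -> Prop) :
  is_topology OX -> T1_space OX -> k_space OX ->
  (exists A : X -> Prop, closed OX A /\ homeomorphic (sub_topo OX A) K_topo) ->
  (exists B : X -> Prop, closed OX B /\ homeomorphic (sub_topo OX B) V_topo) ->
  jointly_continuous OG mu -> jointly_continuous OG lam -> jointly_continuous OG rho ->
  (forall x y, lam (mu x y) y = x) -> (forall x y, rho x (mu x y) = y) ->
  closed OG AG -> (forall x y, AG x -> AG y -> AG (mu x y)) ->
  ~ homeomorphic OX (sub_topo OG AG).
Proof.
  intros Htop HT1 Hk [A [HA HAK]] [B [HB HBV]] cmu clam crho lam_mu rho_mu HAG Hmu Hh.
  destruct (closed_copy_embeds OX K_topo OG A AG HA HAK HAG Hh) as [f [cf [rf Af]]].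
  destruct (closed_copy_embeds OX V_topo OG B AG HB HBV HAG Hh) as [g [cg [rg Ag]]].
  pose proof (K_sequence_image _ _ f k0 kp cf rf K_topo_K_sequence) as Ku.
  pose proof (fan_sequence_image _ _ g vc vp cg rg V_topo_fan_sequence) as Fv.
  apply (product_not_isolated_from_grid G OG mu lam cmu clam lam_mu _ _ _ _ Ku Fv).
  apply (grid_isolates_points OX OG AG (fun n m => mu (f (kp n m)) (g (vp n m))));
    auto.
  - intros n z. exact (grid_row_no_cluster G OG mu lam clam lam_mu _ _ _ _ Ku Fv n z).
  - intros j z.
    exact (grid_selection_no_cluster G OG mu rho crho rho_mu _ _ _ _ Ku Fv j z).
Qed.

Lemma product_jointly_continuous {T : Type} (O : topo T) (f : T -> T -> T) :
  continuous (prod_topo O O) O (fun p => f (fst p) (snd p)) -> jointly_continuous O f.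
Proof.
  intros Hc x y W HW Wxy.
  destruct (Hc W HW (x, y) Wxy) as [U1 [U2 [HU1 [HU2 [U1x [U2y HU]]]]]].
  exists U1, U2. repeat split; auto. intros u v Uu Uv. exact (HU (u, v) Uu Uv).
Qed.

Lemma jointly_continuous_comp {T : Type} (O : topo T) (f : T -> T -> T) (h1 h2 : T -> T) :
  jointly_continuous O f -> continuous O O h1 -> continuous O O h2 ->
  jointly_continuous O (fun x y => f (h1 x) (h2 y)).
Proof.
  intros Hf H1 H2 x y W HW Wxy.
  destruct (Hf _ _ W HW Wxy) as [U1 [U2 [HU1 [HU2 [U1x [U2y HU]]]]]].
  exists (fun u => U1 (h1 u)), (fun v => U2 (h2 v)). repeat split; auto.
Qed.

Lemma continuous_scal {E : Type} (O : topo E) (scal : R -> E -> E) : is_topology O ->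
  continuous (prod_topo R_topo O) O (fun p => scal (fst p) (snd p)) ->
  forall t, continuous O O (scal t).
Proof.
  intros Htop Hc t U HU. apply (open_of_local O); [exact Htop|]. intros y Uy.
  destruct (Hc U HU (t, y) Uy) as [U1 [U2 [_ [HU2 [U1t [U2y HU']]]]]].
  exists U2. repeat split; auto. intros x U2x. exact (HU' (t, x) U1t U2x).
Qed.

Corollary closed_multiplicative_not_homeomorphic {X : Type} (OX : topo X) :
  is_topology OX -> T1_space OX -> k_space OX ->
  (exists A : X -> Prop, closed OX A /\ homeomorphic (sub_topo OX A) K_topo) ->
  (exists B : X -> Prop, closed OX B /\ homeomorphic (sub_topo OX B) V_topo) ->
  forall (G : Type) (OG : topo G) (mul : G -> G -> G) (inv : G -> G) (e : G),
    is_topological_group OG mul inv e ->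
    forall A : G -> Prop, closed OG A -> multiplicative mul A ->
      ~ homeomorphic OX (sub_topo OG A).
Proof.
  intros Htop HT1 Hk HK HV G OG mul inv e [_ [assoc [el [er [il [ir [cm ci]]]]]]] A HA Hmul.
  pose proof (product_jointly_continuous OG mul cm) as cmul.
  apply (closed_stable_copy_not_homeomorphic OX OG mul
    (fun z y => mul z (inv y)) (fun x z => mul (inv x) z)); auto.
  - exact (jointly_continuous_comp OG mul _ _ cmul (continuous_id OG) ci).
  - exact (jointly_continuous_comp OG mul _ _ cmul ci (continuous_id OG)).
  - intros x y. rewrite <- assoc, ir, er. reflexivity.
  - intros x y. rewrite assoc, il, el. reflexivity.
Qed.

Corollary closed_convex_not_homeomorphic {X : Type} (OX : topo X) :
  is_topology OX -> T1_space OX -> k_space OX ->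
  (exists A : X -> Prop, closed OX A /\ homeomorphic (sub_topo OX A) K_topo) ->
  (exists B : X -> Prop, closed OX B /\ homeomorphic (sub_topo OX B) V_topo) ->
  forall (E : Type) (OE : topo E) (zero : E) (add : E -> E -> E) (opp : E -> E)
    (scal : R -> E -> E),
    is_linear_topological_space OE zero add opp scal ->
    forall A : E -> Prop, closed OE A -> convex add scal A ->
      ~ homeomorphic OX (sub_topo OE A).
Proof.
  intros Htop HT1 Hk HK HV E OE zero add opp scal
    [topE [assoc [comm [zl [il [sd [sp [sm [s1 [ca cs]]]]]]]]]] A HA Hcv.
  pose proof (product_jointly_continuous OE add ca) as cadd.
  pose proof (continuous_scal OE scal topE cs) as cscal.
  assert (s0 : forall x, scal 0 x = zero).
  { intro x. set (w := scal 0 x).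
    assert (Hw : w = add w w) by (unfold w; rewrite <- sp, Rplus_0_r; reflexivity).
    transitivity (add (add (opp w) w) w); [rewrite il, zl; reflexivity|].
    rewrite <- assoc, <- Hw. apply il. }
  assert (zr : forall x, add x zero = x) by (intro; rewrite comm; auto).
  assert (scal_half : forall t x y, t * / 2 = 1 -> t * (1 - / 2) = 1 ->
    scal t (add (scal (/ 2) x) (scal (1 - / 2) y)) = add x y).
  { intros t x y H1 H2. rewrite sd, <- !sm, H1, H2, !s1. reflexivity. }
  apply (closed_stable_copy_not_homeomorphic OX OE
    (fun x y => add (scal (/ 2) x) (scal (1 - / 2) y))
    (fun z y => add (scal 2 z) (scal (-1) y))
    (fun x z => add (scal (-1) x) (scal 2 z))); auto.
  - exact (jointly_continuous_comp OE add _ _ cadd (cscal _) (cscal _)).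
  - exact (jointly_continuous_comp OE add _ _ cadd (cscal _) (cscal _)).
  - exact (jointly_continuous_comp OE add _ _ cadd (cscal _) (cscal _)).
  - intros x y. rewrite scal_half by field.
    rewrite <- assoc. rewrite <- (s1 y) at 1. rewrite <- sp.
    replace (1 + -1) with 0 by ring. rewrite s0. apply zr.
  - intros x y. rewrite scal_half by field.
    rewrite assoc. rewrite <- (s1 x) at 2. rewrite <- sp.
    replace (-1 + 1) with 0 by ring. rewrite s0. apply zl.
  - intros x y Ax Ay. apply Hcv; [exact Ax | exact Ay | lra].
Qed.

Theorem theorem1 (X : Type) (OX : topo X) :
  is_topology OX -> normal OX -> k_space OX ->
  (exists A : X -> Prop, closed OX A /\ homeomorphic (sub_topo OX A) K_topo) ->
  (exists B : X -> Prop, closed OX B /\ homeomorphic (sub_topo OX B) V_topo) ->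
  (forall (G : Type) (OG : topo G) (mul : G -> G -> G) (inv : G -> G) (e : G),
     is_topological_group OG mul inv e ->
     forall A : G -> Prop, closed OG A -> multiplicative mul A ->
       ~ homeomorphic OX (sub_topo OG A)) /\
  (forall (E : Type) (OE : topo E) (zero : E) (add : E -> E -> E) (opp : E -> E)
     (scal : R -> E -> E),
     is_linear_topological_space OE zero add opp scal ->
     forall A : E -> Prop, closed OE A -> convex add scal A ->
       ~ homeomorphic OX (sub_topo OE A)).
Proof.
  intros Htop [HT1 _] Hk HK HV. split.
  - exact (closed_multiplicative_not_homeomorphic OX Htop HT1 Hk HK HV).
  - exact (closed_convex_not_homeomorphic OX Htop HT1 Hk HK HV).
Qed.
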